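(* Let $K$ be a simplicial complex on $[m]$ which has a minimal Taylor resolution, and let $\Bbbk$ be a commutative ring. If $\Bbbk[K]$ is Golod, then any two distinct minimal non-faces of $K$ are not disjoint.
   Context: A minimal non-face of $K$ is a non-empty $N\subset[m]$ with $N\notin K$ and $N-\{i\}\in K$ for all $i\in N$. $\Bbbk[K]=\Bbbk[v_1,\ldots,v_m]/(v_I\mid I\notin K)$, $|v_i|=2$; it is Golod if all products and (higher) Massey products in the positive-degree part of $\mathrm{Tor}_{\Bbbk[v_1,\ldots,v_m]}(\Bbbk[K],\Bbbk)$ (induced from the Koszul resolution) are trivial. With $N_1,\ldots,N_r$ the minimal non-faces, $K$ has a minimal Taylor resolution if the Taylor resolution of $\Bbbk[K]$ (free on $w_{i_1,\ldots,i_\ell}$, $d(w_{i_1,\ldots,i_\ell})=\sum_k(-1)^{k+1}v_{(N_{i_1}\cup\cdots\cup N_{i_\ell})-(N_{i_1}\cup\cdots\widehat{N_{i_k}}\cdots\cup N_{i_\ell})}w_{i_1,\ldots,\widehat{i_k},\ldots,i_\ell}$, $v_\emptyset=1$) satisfies $d\otimes\Bbbk=0$; equivalently $N_i\not\subset\bigcup_{k\ne i}N_k$ for all $i$. *)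

From HB Require Import structures.
From mathcomp Require Import all_boot all_order all_algebra.
From mathcomp Require Import mpoly.

Set Implicit Arguments.
Unset Strict Implicit.
Unset Printing Implicit Defensive.
Import GRing.Theory.
Local Open Scope ring_scope.

(** [K] is a simplicial complex on [m]: a family of subsets of [m] closed
    under taking subsets (ghost vertices allowed). *)
Definition simplicial_complex (m : nat) (K : {set {set 'I_m}}) : Prop :=
  forall (s t : {set 'I_m}), s \in K -> t \subset s -> t \in K.

Definition min_nonface (m : nat) (K : {set {set 'I_m}}) (N : {set 'I_m}) : Prop :=
  [/\ N != set0, N \notin K & forall i, i \in N -> N :\ i \in K].

(** K has a minimal Taylor resolution: the Taylor resolution differential
    tensored with k vanishes.  For a family of minimal non-faces I (indexing
    the generator w_I) and N in I, the coefficient of w_{I - N} in d(w_I) is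
    the monomial v_S with S = (U I) - (U (I - N)); this is 0 after tensoring
    with k iff S is non-empty (v_emptyset = 1).  The w_{I-N} are distinct
    basis elements, so d (x) k = 0 iff all such S are non-empty. *)
Definition minimal_taylor (m : nat) (K : {set {set 'I_m}}) : Prop :=
  forall (I : {set {set 'I_m}}),
    (forall N, N \in I -> min_nonface K N) ->
    forall N, N \in I ->
      (\bigcup_(M in I) M) :\: (\bigcup_(M in I :\ N) M) != set0.

(* The Koszul dga  k[K] (x) Lambda[u_1..u_m],  computing                    *)
(* Tor_{k[v_1..v_m]}(k[K], k) as an algebra.                                *)
(* An element is represented as a function J |-> p_J, meaning               *)
(*   sum_J p_J u_J,  p_J in k[v_1,...,v_m],                                *)
(* where u_J = u_{j1} ... u_{jp} (j1 < ... < jp).  Elements of the Koszul   *)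
(* algebra are the "reduced" ones: every monomial v^a of every p_J has      *)
(* support in K (these monomials form a k-basis of k[K]).                   *)

Section Koszul.
Variables (m : nat) (K : {set {set 'I_m}}) (k : comNzRingType).

Definition KA := {ffun {set 'I_m} -> {mpoly k[m]}}.

Definition msupport (a : 'X_{1..m}) : {set 'I_m} := [set i | a i != 0%N].

(** reduction modulo the Stanley-Reisner ideal (projection onto the basis) *)
Definition SRred (p : {mpoly k[m]}) : {mpoly k[m]} :=
  \sum_(a <- msupp p | msupport a \in K) p@_a *: 'X_[a].

Definition reduced (x : KA) : Prop :=
  forall J a, a \in msupp (x J) -> msupport a \in K.

(** sign of u_J u_J' = sign * u_{J u J'} for disjoint J, J' *)
Definition ext_sign (J J' : {set 'I_m}) : k :=
  (-1) ^+ #|[set p : 'I_m * 'I_m | (p.1 \in J) && (p.2 \in J') && (p.2 < p.1)%N]|.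

Definition Kmul (x y : KA) : KA :=
  [ffun L : {set 'I_m} => \sum_(J : {set 'I_m}) \sum_(J' : {set 'I_m} |
       (J :&: J' == set0) && (J :|: J' == L))
       ext_sign J J' *: SRred (x J * y J')].

(** Koszul differential: d(u_i) = v_i, d(v_i) = 0, Leibniz rule *)
Definition Kd (x : KA) : KA :=
  [ffun L : {set 'I_m} => \sum_(i : 'I_m | i \notin L)
       (-1) ^+ #|[set j in L | (j < i)%N]| *: SRred ('X_i * x (i |: L))].

(** total degree of v^a u_J is 2|a| + |J|; its parity is that of |J|. *)
Definition Khomog (d : nat) (x : KA) : Prop :=
  forall J a, a \in msupp (x J) -> (2 * mdeg a + #|J|)%N = d.

(** bar x = (-1)^(1 + deg x) x, extended componentwise *)
Definition Kbar (x : KA) : KA := [ffun J : {set 'I_m} => (-1) ^+ (#|J|.+1) *: x J].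

Definition Kcycle (x : KA) : Prop := reduced x /\ Kd x = 0.
Definition Kboundary (x : KA) : Prop := exists y, reduced y /\ x = Kd y.

Definition pos_cycle (x : KA) : Prop := Kcycle x /\ exists d, (0 < d)%N /\ Khomog d x.

(** Defining system for the Massey product <[c_0], ..., [c_(n-1)]>
    (indices 0..n-1): elements a i j, 0 <= i <= j <= n-1, (i,j) <> (0,n-1). *)
Definition defining_system (n : nat) (c : nat -> KA) (a : nat -> nat -> KA) : Prop :=
  forall i j, (i <= j < n)%N -> ~ (i = 0%N /\ j = n.-1) ->
    [/\ reduced (a i j),
        (i = j -> Kboundary (a i i - c i)) &
        ((i < j)%N -> Kd (a i j) = \sum_(i <= l < j) Kmul (Kbar (a i l)) (a l.+1 j))].

Definition massey_value (n : nat) (a : nat -> nat -> KA) : KA :=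
  \sum_(0 <= l < n.-1) Kmul (Kbar (a 0%N l)) (a l.+1 n.-1).

End Koszul.

(** k[K] is Golod: all products and higher Massey products of classes in
    the positive-degree part of Tor are trivial, i.e. whenever the Massey
    product <a_1,...,a_n> (n >= 2) is defined it contains 0.  For n = 2
    this says exactly that the product a_1 a_2 is zero. *)
Definition golod (k : comNzRingType) (m : nat) (K : {set {set 'I_m}}) : Prop :=
  forall (n : nat) (c : nat -> KA m k), (2 <= n)%N ->
    (forall i, (i < n)%N -> pos_cycle K (c i)) ->
    (exists a, defining_system K n c a) ->
    exists a, defining_system K n c a /\ Kboundary K (massey_value K n a).

From HB Require Import structures.
From mathcomp Require Import all_boot all_order all_algebra.
From mathcomp Require Import mpoly.

(** Suppose N1, N2 are disjoint minimal non-faces and let W = N1 ∪ N2.  For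
    i ∈ N1 and j ∈ N2 the elements v_{N1-i} u_i and v_{N2-j} u_j are Koszul
    cycles of positive degree.  Consider the functional
      φ(x) = Σ_{p ∈ N1, q ∈ N2} ± (coefficient of v_{W-{p,q}} u_{p,q} in x).
    The minimal Taylor condition forces W - {p,q} ∈ K: a minimal non-face
    M ⊆ W - {p,q} would differ from N1 and N2 although it is covered by them.
    Hence the coefficient of v_{W-{p,q}} u_{p,q} in a boundary d z is a sum
    over l ∈ W - {p,q} of terms coming from z_{p,q,l}, and these cancel in
    pairs in φ(d z), so φ vanishes on boundaries.  But φ takes the value 1 on
    the product of the two cycles above, so this product is not a boundary;
    by the Leibniz rule no choice of representatives makes it one, and the
    Massey product of length two witnesses that k[K] is not Golod. *)

Set Implicit Arguments.
Unset Strict Implicit.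
Unset Printing Implicit Defensive.
Import GRing.Theory.
Local Open Scope ring_scope.

Section StanleyReisnerReduction.
Variables (m : nat) (K : {set {set 'I_m}}) (k : comNzRingType).
Implicit Types (p q : {mpoly k[m]}).

Lemma mcoeff_SRred p b :
  (SRred K p)@_b = if msupport b \in K then p@_b else 0.
Proof.
rewrite /SRred raddf_sum /= big_mkcond /=.
under eq_bigr => a _ do rewrite mcoeffZ mcoeffX.
case: (boolP (b \in msupp p)) => hb.
  rewrite (bigD1_seq b) //= ?msupp_uniq // eqxx mulr1 big1 ?addr0 //.
  by move=> a /negbTE; rewrite eq_sym => ->; rewrite mulr0 if_same.
move: (hb); rewrite -mcoeff_eq0 => /eqP ->; rewrite if_same big_seq big1 // => a ha.
case: (a =P b) => [ab|_]; last by rewrite mulr0 if_same.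
by move: ha hb; rewrite ab => ->.
Qed.

Lemma SRred_is_linear : linear (@SRred m K k).
Proof.
move=> c p q; apply/mpolyP => b; rewrite !(mcoeffD, mcoeffZ, mcoeff_SRred).
by case: ifP; rewrite ?mulr0 ?addr0.
Qed.

HB.instance Definition _ :=
  GRing.isLinear.Build k {mpoly k[m]} {mpoly k[m]} _ (@SRred m K k) SRred_is_linear.

Lemma SRredZ c p : SRred K (c *: p) = c *: SRred K p.
Proof. exact: linearZ. Qed.

Lemma SRredD p q : SRred K (p + q) = SRred K p + SRred K q.
Proof. exact: linearD. Qed.

Lemma SRred_sum (I : Type) (r : seq I) (P : pred I) (F : I -> {mpoly k[m]}) :
  SRred K (\sum_(i <- r | P i) F i) = \sum_(i <- r | P i) SRred K (F i).
Proof. exact: linear_sum. Qed.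

Lemma SRred0 : SRred K (0 : {mpoly k[m]}) = 0.
Proof. exact: linear0. Qed.

Lemma SRredX_face a : msupport a \in K -> SRred K ('X_[a] : {mpoly k[m]}) = 'X_[a].
Proof.
move=> ha; apply/mpolyP => b; rewrite mcoeff_SRred mcoeffX.
by case: ifP => // hb; case: (a =P b) => // ab; rewrite ab hb in ha.
Qed.

Lemma SRredX_nonface a : msupport a \notin K -> SRred K ('X_[a] : {mpoly k[m]}) = 0.
Proof.
move=> ha; apply/mpolyP => b; rewrite mcoeff_SRred mcoeffX mcoeff0.
by case: ifP => // hb; case: (a =P b) => // ab; rewrite ab hb in ha.
Qed.

Lemma msupportDl (a b : 'X_{1..m}) : msupport a \subset msupport (a + b).
Proof.
apply/subsetP => i; rewrite !inE mnmDE; apply: contra => /eqP.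
by move/eqP; rewrite addn_eq0 => /andP[].
Qed.

Hypothesis K_complex : simplicial_complex K.

Lemma SRredMl p q : SRred K (SRred K p * q) = SRred K (p * q).
Proof.
apply/mpolyP => b; rewrite !mcoeff_SRred; case: ifP => // hb.
rewrite !mcoeffM; apply: eq_bigr => ab /eqP hab; rewrite mcoeff_SRred.
suff -> : msupport ab.1 \in K by [].
by apply: (K_complex hb); move: (msupportDl ab.1 ab.2); rewrite -hab.
Qed.

Lemma SRredMr p q : SRred K (p * SRred K q) = SRred K (p * q).
Proof. by rewrite mulrC SRredMl mulrC. Qed.

End StanleyReisnerReduction.

Section SignCounts.
Variable m : nat.
Implicit Types (i j : 'I_m) (J L : {set 'I_m}).

Definition nbelow i L := #|[set j in L | (j < i)%N]|.
Definition nabove i L := #|[set j in L | (i < j)%N]|.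
Definition ninv J J' :=
  #|[set p : 'I_m * 'I_m | (p.1 \in J) && (p.2 \in J') && (p.2 < p.1)%N]|.

Lemma ext_signE (R : comNzRingType) J J' : ext_sign R J J' = (-1) ^+ ninv J J'.
Proof. by []. Qed.

Lemma nbelowE i L : nbelow i L = (\sum_(j in L) (j < i)%N)%N.
Proof.
rewrite /nbelow -sum1_card [RHS]big_mkcond [LHS]big_mkcond.
by apply: eq_bigr => j _; rewrite inE; case: (j \in L); case: (j < i)%N.
Qed.

Lemma naboveE i L : nabove i L = (\sum_(j in L) (i < j)%N)%N.
Proof.
rewrite /nabove -sum1_card [RHS]big_mkcond [LHS]big_mkcond.
by apply: eq_bigr => j _; rewrite inE; case: (j \in L); case: (i < j)%N.
Qed.

Lemma ninvE J J' : ninv J J' = (\sum_(a in J) nbelow a J')%N.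
Proof.
rewrite /ninv -sum1_card.
under [RHS]eq_bigr => a _ do rewrite /nbelow -sum1_card.
by rewrite pair_big_dep /=; apply: eq_bigl => -[a b] /=; rewrite !inE andbA.
Qed.

Lemma nbelow_split i J L : J \subset L ->
  nbelow i L = (nbelow i J + nbelow i (L :\: J))%N.
Proof. by move=> hJ; rewrite !nbelowE (big_setID J) /=; move/setIidPr: hJ => ->. Qed.

Lemma nbelowU1 i j L : j \notin L -> nbelow i (j |: L) = ((j < i)%N + nbelow i L)%N.
Proof. by move=> hj; rewrite !nbelowE big_setU1. Qed.

Lemma nbelow1 i j : nbelow i [set j] = (j < i)%N.
Proof. by rewrite nbelowE big_set1. Qed.

Lemma nbelow2 i p q : p != q -> nbelow i [set p; q] = ((p < i)%N + (q < i)%N)%N.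
Proof. by move=> hpq; rewrite nbelowU1 ?nbelow1 // inE. Qed.

Lemma ninvU1l i J J' : i \notin J -> ninv (i |: J) J' = (nbelow i J' + ninv J J')%N.
Proof. by move=> hi; rewrite !ninvE big_setU1. Qed.

Lemma ninvU1r i J J' : i \notin J' -> ninv J (i |: J') = (nabove i J + ninv J J')%N.
Proof.
move=> hi; rewrite !ninvE naboveE -big_split /=; apply: eq_bigr => a _.
by rewrite nbelowU1.
Qed.

Lemma nbelow_nabove i J : i \notin J -> (nbelow i J + nabove i J)%N = #|J|.
Proof.
move=> hi; rewrite nbelowE naboveE -big_split -sum1_card /=; apply: eq_bigr => j hj.
have hji : j != i by apply: contraNneq hi => <-.
by case: (ltngtP j i) => // /val_inj ji; rewrite ji eqxx in hji.
Qed.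

End SignCounts.

Lemma signr_odd_eq (R : pzRingType) n1 n2 : odd n1 = odd n2 -> (-1) ^+ n1 = (-1) ^+ n2 :> R.
Proof. by move=> h; rewrite -signr_odd h signr_odd. Qed.

Ltac solve_odd := rewrite ?oddD /= ?oddD /=;
  repeat match goal with |- context [odd ?t] => case: (odd t) end; by [].

Section SubsetSums.
Variables (m : nat) (V : nmodType).
Implicit Types (i : 'I_m) (A L : {set 'I_m}) (F : {set 'I_m} -> V).

Lemma big_subsetU1 i A F : i \notin A ->
  \sum_(J : {set 'I_m} | J \subset i |: A) F J =
  \sum_(J : {set 'I_m} | J \subset A) F J + \sum_(J : {set 'I_m} | J \subset A) F (i |: J).
Proof.
move=> hi; rewrite (bigID (fun J : {set 'I_m} => i \in J)) /= addrC; congr (_ + _).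
  apply: eq_bigl => J; apply/andP/idP => [[/subsetP h hJ]|/subsetP h].
    apply/subsetP => x hx; have := h x hx; rewrite !inE.
    by case: eqP => // ?; subst x; rewrite hx in hJ.
  split; last by apply: contra hi; apply: h.
  by apply/subsetP => x /h hx; rewrite !inE hx orbT.
rewrite (reindex_onto (fun J => i |: J) (fun J => J :\ i)) /=.
  apply: eq_bigl => J; apply/idP/idP.
    case/andP => /andP[/subsetP h _] /eqP hJ; apply/subsetP => x hx.
    have : x \in i |: A by apply: h; rewrite !inE hx orbT.
    rewrite !inE; case: eqP => // ?; subst x.
    by move: hx; rewrite -hJ !inE eqxx.
  move=> /subsetP h; rewrite !inE eqxx andbT; apply/andP; split.
    by apply/subsetP => x; rewrite !inE => /orP[->//|/h ->]; rewrite orbT.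
  have hiJ : i \notin J by apply: contra hi; apply: h.
  by apply/eqP; rewrite setU1K.
by move=> J /andP[_ hJ]; rewrite setD1K.
Qed.

Lemma big_subset_mem i L F : i \in L ->
  \sum_(J : {set 'I_m} | J \subset L) F J =
  \sum_(J : {set 'I_m} | J \subset L :\ i) F J + \sum_(J : {set 'I_m} | J \subset L :\ i) F (i |: J).
Proof. by move=> hi; rewrite -{1}(setD1K hi) big_subsetU1 // setD11. Qed.

End SubsetSums.

Lemma sum_pairs_antisym (m : nat) (V : zmodType) (Q : pred 'I_m) (f : 'I_m -> 'I_m -> V) :
  (forall i j, Q i -> Q j -> (i < j)%N -> f j i = - f i j) ->
  \sum_(i | Q i) \sum_(j | Q j && (j != i)) f i j = 0.
Proof.
move=> hf.
have -> : \sum_(i | Q i) \sum_(j | Q j && (j != i)) f i j =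
  \sum_(i | Q i) \sum_(j | Q j && (i < j)%N) f i j +
  \sum_(i | Q i) \sum_(j | Q j && (j < i)%N) f i j.
  rewrite -big_split; apply: eq_bigr => i _; rewrite (bigID (fun j : 'I_m => (i < j)%N)) /=.
  congr (_ + _); apply: eq_bigl => j; rewrite -val_eqE /=;
    case: (ltngtP i j) => h; rewrite ?andbT ?andbF //= ?(gtn_eqF h) ?(ltn_eqF h) ?h ?eqxx ?andbT ?andbF //.
rewrite [X in _ + X](exchange_big_dep Q) /=; last by move=> i j _ /andP[].
rewrite -big_split big1 // => a ha.
have -> : \sum_(i | [&& Q i, Q a & (a < i)%N]) f i a = \sum_(i | Q i && (a < i)%N) f i a.
  by apply: eq_bigl => i; rewrite ha.
by rewrite -big_split big1 // => b /andP[hb hab] /=; rewrite (hf a b) // addrN.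
Qed.

Section SetU1Diff.
Variable T : finType.
Implicit Types (i : T) (J L : {set T}).

Lemma setU1D i J L : i \notin J -> (i |: L) :\: J = i |: (L :\: J).
Proof.
move=> hi; apply/setP => z; rewrite !inE; case: (z =P i) => [->|_] //.
by rewrite (negbTE hi).
Qed.

Lemma setU1DU1 i J L : i \notin L -> (i |: L) :\: (i |: J) = L :\: J.
Proof.
move=> hi; apply/setP => z; rewrite !inE; case: (z =P i) => [->|_] //.
by rewrite (negbTE hi) andbF.
Qed.

Lemma setU1_DU1 i J L : i \in L -> i \notin J -> i |: (L :\: (i |: J)) = L :\: J.
Proof.
move=> hL hJ; apply/setP => z; rewrite !inE; case: (z =P i) => [->|_] //.
by rewrite hL (negbTE hJ).
Qed.

Lemma disjoint_cover_eq J J' L : J \subset L ->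
  ((J :&: J' == set0) && (J :|: J' == L)) = (J' == L :\: J).
Proof.
move=> hJL; apply/idP/eqP.
- case/andP => /eqP h1 /eqP h2; apply/setP => x.
  move/setP/(_ x): h1; move/setP/(_ x): h2.
  by rewrite !inE; case: (x \in J); case: (x \in J'); case: (x \in L).
- move=> ->; apply/andP; split; apply/eqP/setP => x; rewrite !inE;
  have := subsetP hJL x; by case: (x \in J); case: (x \in L) => // ->.
Qed.

End SetU1Diff.

Section KoszulAlgebra.
Variables (m : nat) (K : {set {set 'I_m}}) (k : comNzRingType).
Implicit Types (x y z : KA m k) (i : 'I_m) (J L : {set 'I_m}).

Lemma KmulE x y L : Kmul K x y L =
  \sum_(J : {set 'I_m} | J \subset L) ext_sign k J (L :\: J) *: SRred K (x J * y (L :\: J)).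
Proof.
rewrite ffunE [RHS]big_mkcond; apply: eq_bigr => J _; case: ifP => hJ.
  by rewrite (big_pred1 (L :\: J)) // => J'; apply: disjoint_cover_eq.
by rewrite big1 // => J' /andP[_ /eqP h]; move: hJ; rewrite -h subsetUl.
Qed.

Lemma KdE x L : Kd K x L =
  \sum_(i | i \notin L) (-1) ^+ nbelow i L *: SRred K ('X_i * x (i |: L)).
Proof. by rewrite ffunE. Qed.

Lemma Kd_is_linear : linear (@Kd m K k).
Proof.
move=> c x y; apply/ffunP => L; rewrite !ffunE scaler_sumr -big_split.
apply: eq_bigr => i _; rewrite !ffunE mulrDr -scalerAr SRredD SRredZ.
by rewrite scalerDr !scalerA mulrC.
Qed.

HB.instance Definition _ :=
  GRing.isLinear.Build k (KA m k) (KA m k) _ (@Kd m K k) Kd_is_linear.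

Lemma KmulDl x y z : Kmul K (x + y) z = Kmul K x z + Kmul K y z.
Proof.
apply/ffunP => L; rewrite [RHS]ffunE !KmulE -big_split; apply: eq_bigr => J _.
by rewrite ffunE mulrDl SRredD scalerDr.
Qed.

Lemma KmulDr x y z : Kmul K x (y + z) = Kmul K x y + Kmul K x z.
Proof.
apply/ffunP => L; rewrite [RHS]ffunE !KmulE -big_split; apply: eq_bigr => J _.
by rewrite ffunE mulrDr SRredD scalerDr.
Qed.

Lemma Kmul0l y : Kmul K 0 y = 0.
Proof.
apply/ffunP => L; rewrite [RHS]ffunE KmulE big1 // => J _.
by rewrite ffunE mul0r SRred0 scaler0.
Qed.

Lemma Kmul0r x : Kmul K x 0 = 0.
Proof.
apply/ffunP => L; rewrite [RHS]ffunE KmulE big1 // => J _.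
by rewrite ffunE mulr0 SRred0 scaler0.
Qed.

Definition Kinvol x : KA m k := [ffun J : {set 'I_m} => (-1) ^+ #|J| *: x J].

Lemma Kbar_Kinvol x : Kbar x = Kinvol (- x).
Proof. by apply/ffunP => J; rewrite !ffunE exprS mulN1r scaleNr scalerN. Qed.

Lemma KbarD x y : Kbar (x + y) = Kbar x + Kbar y.
Proof. by apply/ffunP => J; rewrite !ffunE scalerDr. Qed.

Lemma Kbar_Kd y : Kbar (Kd K y) = - Kd K (Kbar y).
Proof.
apply/ffunP => J; rewrite !ffunE scaler_sumr -sumrN; apply: eq_bigr => i hi.
rewrite ffunE -scalerAr SRredZ !scalerA -scaleNr; congr (_ *: _).
rewrite cardsU1 hi /= -!exprD -[RHS]mulN1r -exprS; apply: signr_odd_eq.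
solve_odd.
Qed.

Hypothesis K_complex : simplicial_complex K.

Lemma Kd2 x : Kd K (Kd K x) = 0.
Proof.
apply/ffunP => L; rewrite ffunE [RHS]ffunE.
under eq_bigr => i hi do rewrite ffunE mulr_sumr SRred_sum scaler_sumr.
under eq_bigr => i hi do under eq_bigr => j hj do
  rewrite -scalerAr SRredZ SRredMr // scalerA.
rewrite (eq_bigr (fun i => \sum_(j | (j \notin L) && (j != i))
   ((-1) ^+ nbelow i L * (-1) ^+ nbelow j (i |: L)) *:
     SRred K ('X_i * ('X_j * x (j |: (i |: L)))))).
  apply: sum_pairs_antisym => i j hi hj hij.
  have hji : j != i by rewrite neq_ltn hij orbT.
  rewrite mulrCA setUCA -scaleNr; congr (_ *: _).
  rewrite !nbelowU1 // -!exprD -[RHS]mulN1r -exprS; apply: signr_odd_eq.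
  by rewrite hij (ltnNge j i) (ltnW hij) /=; solve_odd.
by move=> i hi; apply: eq_bigl => j; rewrite !inE negb_or andbC.
Qed.

Section Leibniz.
Variables (x y : KA m k) (L : {set 'I_m}).
Let P (i : 'I_m) (A B : {set 'I_m}) := SRred K ('X_i * (x A * y B)).
Let s (i : 'I_m) (A : {set 'I_m}) : k := (-1) ^+ nbelow i A.
Let e (A B : {set 'I_m}) : k := ext_sign k A B.

Lemma Kd_Kmul_expand : Kd K (Kmul K x y) L = \sum_(i | i \notin L)
  (\sum_(J : {set 'I_m} | J \subset L) (s i L * e J (i |: (L :\: J))) *: P i J (i |: (L :\: J)) +
   \sum_(J : {set 'I_m} | J \subset L) (s i L * e (i |: J) (L :\: J)) *: P i (i |: J) (L :\: J)).
Proof.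
rewrite KdE; apply: eq_bigr => i hi.
rewrite KmulE mulr_sumr SRred_sum scaler_sumr big_subsetU1 //; congr (_ + _);
  apply: eq_bigr => J hJ; rewrite -scalerAr SRredZ SRredMr // scalerA.
  have hiJ : i \notin J by apply: contra hi; apply: (subsetP hJ).
  by rewrite setU1D.
by rewrite setU1DU1.
Qed.

Lemma Kmul_Kd_expand : Kmul K (Kd K x) y L = \sum_(J : {set 'I_m} | J \subset L)
  \sum_(i | i \notin J) (e J (L :\: J) * s i J) *: P i (i |: J) (L :\: J).
Proof.
rewrite KmulE; apply: eq_bigr => J hJ; rewrite KdE mulr_suml SRred_sum scaler_sumr.
by apply: eq_bigr => i hi; rewrite -scalerAl SRredZ SRredMl // scalerA -mulrA.
Qed.

Lemma Kmul_Kinvol_Kd_expand : Kmul K (Kinvol x) (Kd K y) L =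
  \sum_(J : {set 'I_m} | J \subset L) \sum_(i | i \notin L :\: J)
    (e J (L :\: J) * (-1) ^+ #|J| * s i (L :\: J)) *: P i J (i |: (L :\: J)).
Proof.
rewrite KmulE; apply: eq_bigr => J hJ; rewrite ffunE KdE mulr_sumr SRred_sum scaler_sumr.
apply: eq_bigr => i hi; rewrite -scalerAl -scalerAr !SRredZ SRredMr // !scalerA.
by congr (_ *: _); rewrite ?mulrA // /P mulrA [x J * _]mulrC.
Qed.

Lemma Kd_Kmul_right_terms : \sum_(i | i \notin L) \sum_(J : {set 'I_m} | J \subset L)
     (s i L * e J (i |: (L :\: J))) *: P i J (i |: (L :\: J)) =
  \sum_(J : {set 'I_m} | J \subset L) \sum_(i | i \notin L)
     (e J (L :\: J) * (-1) ^+ #|J| * s i (L :\: J)) *: P i J (i |: (L :\: J)).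
Proof.
rewrite exchange_big; apply: eq_bigr => J hJ; apply: eq_bigr => i hi; congr (_ *: _).
have hiJ : i \notin J by apply: contra hi; apply: (subsetP hJ).
have hiD : i \notin L :\: J by rewrite inE (negbTE hi) andbF.
rewrite /s /e !ext_signE -!exprD; apply: signr_odd_eq.
by rewrite (nbelow_split i hJ) ninvU1r // -(nbelow_nabove hiJ); solve_odd.
Qed.

Lemma Kd_Kmul_left_terms : \sum_(i | i \notin L) \sum_(J : {set 'I_m} | J \subset L)
     (s i L * e (i |: J) (L :\: J)) *: P i (i |: J) (L :\: J) =
  \sum_(J : {set 'I_m} | J \subset L) \sum_(i | i \notin L)
     (e J (L :\: J) * s i J) *: P i (i |: J) (L :\: J).
Proof.
rewrite exchange_big; apply: eq_bigr => J hJ; apply: eq_bigr => i hi; congr (_ *: _).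
have hiJ : i \notin J by apply: contra hi; apply: (subsetP hJ).
rewrite /s /e !ext_signE -!exprD; apply: signr_odd_eq.
by rewrite (nbelow_split i hJ) ninvU1l //; solve_odd.
Qed.

(* A term with i ∈ L occurs twice, from the splittings J and i |: J of L. *)
Lemma Kleibniz_inner_terms_cancel :
  \sum_(J : {set 'I_m} | J \subset L) \sum_(i | (i \notin J) && (i \in L))
     (e J (L :\: J) * s i J) *: P i (i |: J) (L :\: J) +
  \sum_(J : {set 'I_m} | J \subset L) \sum_(i | (i \notin L :\: J) && (i \in L))
     (e J (L :\: J) * (-1) ^+ #|J| * s i (L :\: J)) *: P i J (i |: (L :\: J)) = 0.
Proof.
rewrite (exchange_big_dep (fun i => i \in L)); last by move=> J i _ /andP[].
rewrite [X in _ + X](exchange_big_dep (fun i => i \in L)); last by move=> J i _ /andP[].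
rewrite -big_split big1 //= => i hiL.
rewrite (eq_bigl (fun J : {set 'I_m} => J \subset L :\ i)); last first.
  by move=> J; rewrite subsetD1 hiL andbT.
rewrite [X in _ + X](eq_bigl (fun J : {set 'I_m} => (J \subset L) && (i \in J))); last first.
  by move=> J; rewrite !inE hiL !andbT negbK.
rewrite big_mkcondr [X in _ + X](big_subset_mem _ hiL).
rewrite [X in _ + (X + _)]big1 ?add0r; last first.
  by move=> J; rewrite subsetD1 => /andP[_ /negbTE ->].
rewrite -big_split big1 //= => J; rewrite subsetD1 => /andP[hJ hiJ].
rewrite setU11 setU1_DU1 // -scalerDl -[in e J _](setU1_DU1 hiL hiJ).
set D := L :\: (i |: J).
have hiD : i \notin D by rewrite !inE eqxx.
suff -> : e J (i |: D) * s i J + e (i |: J) D * (-1) ^+ #|i |: J| * s i D = 0.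
  by rewrite scale0r.
apply/eqP; rewrite addr_eq0; apply/eqP.
rewrite /s /e !ext_signE -!exprD -[RHS]mulN1r -exprS; apply: signr_odd_eq.
by rewrite ninvU1r // ninvU1l // cardsU1 hiJ -(nbelow_nabove hiJ) /=; solve_odd.
Qed.

Lemma Kleibniz_at :
  Kd K (Kmul K x y) L = Kmul K (Kd K x) y L + Kmul K (Kinvol x) (Kd K y) L.
Proof.
rewrite Kd_Kmul_expand Kmul_Kd_expand Kmul_Kinvol_Kd_expand big_split /=.
rewrite Kd_Kmul_right_terms Kd_Kmul_left_terms.
rewrite [X in _ = X + _](eq_bigr _ (fun J _ => bigID (fun i => i \in L) _ _)).
rewrite [X in _ = _ + X](eq_bigr _ (fun J _ => bigID (fun i => i \in L) _ _)).
rewrite !big_split /= addrACA Kleibniz_inner_terms_cancel add0r addrC.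
congr (_ + _); apply: eq_bigr => J hJ; apply: eq_bigl => i.
  by apply/idP/andP => [hi|[]//]; split => //; apply: contra hi; apply: (subsetP hJ).
by rewrite in_setD negb_and negbK; case: (i \in L); rewrite ?andbF ?orbT.
Qed.

End Leibniz.

Lemma Kleibniz x y :
  Kd K (Kmul K x y) = Kmul K (Kd K x) y + Kmul K (Kinvol x) (Kd K y).
Proof. by apply/ffunP => L; rewrite Kleibniz_at !ffunE. Qed.

Lemma Kmul_Kbar_cohomologous (c0 c1 y0 y1 a0 a1 z : KA m k) :
  Kd K c0 = 0 -> Kd K c1 = 0 -> a0 - c0 = Kd K y0 -> a1 - c1 = Kd K y1 ->
  Kmul K (Kbar a0) a1 = Kd K z -> exists w, Kmul K (Kbar c0) c1 = Kd K w.
Proof.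
move=> dc0 dc1 e0 e1 ez.
have a0E : a0 = c0 + Kd K y0 by rewrite -e0 addrC subrK.
have a1E : a1 = c1 + Kd K y1 by rewrite -e1 addrC subrK.
have da0 : Kd K a0 = 0 by rewrite a0E linearD /= Kd2 dc0 addr0.
have E1 : Kmul K (Kbar a0) (Kd K y1) = Kd K (Kmul K (- a0) y1).
  by rewrite Kleibniz linearN /= da0 oppr0 Kmul0l add0r Kbar_Kinvol.
have E0 : Kmul K (Kbar (Kd K y0)) c1 = Kd K (Kmul K (- Kbar y0) c1).
  by rewrite Kleibniz dc1 Kmul0r addr0 linearN /= Kbar_Kd.
exists (z - Kmul K (- a0) y1 - Kmul K (- Kbar y0) c1).
by rewrite !linearB /= -ez -E1 -E0 a1E KmulDr addrK a0E KbarD KmulDl addrK.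
Qed.

End KoszulAlgebra.

Section MinimalNonfaces.
Variables (m : nat) (K : {set {set 'I_m}}).

Lemma exists_min_nonface_sub (S : {set 'I_m}) : set0 \in K -> S \notin K ->
  exists2 M, min_nonface K M & M \subset S.
Proof.
move=> K0 hS.
have hP : (S \subset S) && (S \notin K) by rewrite subxx hS.
have [M /andP[hMS hMK] hmin] := arg_minnP
  (P := fun M : {set 'I_m} => (M \subset S) && (M \notin K)) (fun M => #|M|) hP.
exists M => //; split => //; first by apply: contraNneq hMK => ->.
move=> x hx; apply/negPn/negP => hK.
have := hmin (M :\ x); rewrite hK andbT (subset_trans (subsetDl M [set x]) hMS).
by rewrite (cardsD1 x M) hx ltnn => /(_ isT).
Qed.

(* Apply the minimal Taylor condition to the family {N1, N2, M} at M. *)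
Lemma min_nonface_sub_setU N1 N2 M : minimal_taylor K ->
  min_nonface K N1 -> min_nonface K N2 -> min_nonface K M ->
  M \subset N1 :|: N2 -> M = N1 \/ M = N2.
Proof.
move=> hT h1 h2 hM hMW; case: (M =P N1) => [|/eqP n1M]; first by left.
case: (M =P N2) => [|/eqP n2M]; first by right.
have hI N : N \in [set N1; N2; M] -> min_nonface K N.
  by rewrite !inE => /orP[/orP[]|] /eqP ->.
have := hT _ hI M; rewrite !inE eqxx orbT => /(_ isT) /negP; case.
apply/eqP/setP => x; rewrite !inE; apply/negP => /andP[hx1 /bigcupP [X hX hxX]].
have hxW : x \in N1 :|: N2.
  move: hX; rewrite !inE => /orP[/orP[]|] /eqP hX; subst X.
  - by rewrite hxX.
  - by rewrite hxX orbT.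
  - by have := subsetP hMW x hxX; rewrite inE.
move/negP: hx1; apply; case/setUP: hxW => hxN.
  by apply/bigcupP; exists N1 => //; rewrite !inE eqxx /= eq_sym n1M.
by apply/bigcupP; exists N2 => //; rewrite !inE eqxx orbT eq_sym n2M.
Qed.

End MinimalNonfaces.

Section IndicatorMonomials.
Variable m : nat.
Implicit Types (S T : {set 'I_m}).

Definition indmnm S : 'X_{1..m} := [multinom ((i \in S) : nat) | i < m].

Lemma indmnmE S i : indmnm S i = (i \in S).
Proof. by rewrite mnmE. Qed.

Lemma msupport_indmnm S : msupport (indmnm S) = S.
Proof. by apply/setP => i; rewrite inE indmnmE; case: (i \in S). Qed.

Lemma indmnmD1 S l : l \in S -> indmnm S = (U_(l) + indmnm (S :\ l))%MM.
Proof.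
move=> hl; apply/mnmP => x; rewrite mnmDE mnm1E !indmnmE !inE.
case: (l =P x) => [<-|/eqP hx]; first by rewrite hl eqxx.
by rewrite eq_sym hx.
Qed.

Lemma indmnmU S T : S :&: T = set0 -> indmnm (S :|: T) = (indmnm S + indmnm T)%MM.
Proof.
move=> /setP h; apply/mnmP => x; rewrite mnmDE !indmnmE inE.
by have := h x; rewrite !inE; case: (x \in S); case: (x \in T).
Qed.

Lemma mcoeffXl_indmnm (k : comNzRingType) (p : {mpoly k[m]}) l S :
  ('X_l * p)@_(indmnm S) = if l \in S then p@_(indmnm (S :\ l)) else 0.
Proof.
rewrite mulrC; case: ifP => hl; first by rewrite (indmnmD1 hl) mcoeffMX.
apply/eqP; rewrite mcoeff_eq0 (perm_mem (msuppMX p U_(l))).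
apply/negP => /mapP [a _ /mnmP /(_ l)].
by rewrite mnmDE mnm1E eqxx indmnmE hl.
Qed.

End IndicatorMonomials.

Section GeneratorCycles.
Variables (m : nat) (K : {set {set 'I_m}}) (k : comNzRingType).

Definition Kgen (N : {set 'I_m}) (i : 'I_m) : KA m k :=
  [ffun J : {set 'I_m} => if J == [set i] then 'X_[indmnm (N :\ i)] else 0].

Lemma Kd_Kgen N i : min_nonface K N -> i \in N -> Kd K (Kgen N i) = 0.
Proof.
move=> [_ hNK _] hi; apply/ffunP => L; rewrite ffunE [RHS]ffunE big1 // => l hl.
rewrite ffunE; case: eqP => [h|_]; last by rewrite mulr0 SRred0 scaler0.
have : l \in [set i] by rewrite -h setU11.
rewrite inE => /eqP ->.
by rewrite -mpolyXD -indmnmD1 // SRredX_nonface ?scaler0 // msupport_indmnm.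
Qed.

Lemma Kgen_pos_cycle N i : min_nonface K N -> i \in N -> pos_cycle K (Kgen N i).
Proof.
move=> hN hi; split; first split.
- move=> J a; rewrite ffunE; case: ifP => _; last by rewrite mcoeff_msupp mcoeff0 eqxx.
  by rewrite msuppX inE => /eqP ->; rewrite msupport_indmnm; case: hN => _ _; apply.
- exact: Kd_Kgen.
exists (2 * mdeg (indmnm (N :\ i)) + 1)%N; split; first by rewrite addn1.
move=> J a; rewrite ffunE; case: eqP => [->|_]; last by rewrite mcoeff_msupp mcoeff0 eqxx.
by rewrite msuppX inE => /eqP ->; rewrite cards1.
Qed.

End GeneratorCycles.

Section DisjointMinimalNonfaces.
Variables (m : nat) (K : {set {set 'I_m}}) (k : comNzRingType).
Variables (N1 N2 : {set 'I_m}).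
Hypotheses (K_complex : simplicial_complex K) (K_taylor : minimal_taylor K).
Hypotheses (N1_min : min_nonface K N1) (N2_min : min_nonface K N2).
Hypothesis N12_disjoint : N1 :&: N2 = set0.
Let W := N1 :|: N2.

Lemma set0_face : set0 \in K.
Proof. by case: N1_min => /set0Pn [i hi] _ /(_ i hi) /K_complex; apply; apply: sub0set. Qed.

Lemma disjoint_neq p q : p \in N1 -> q \in N2 -> p != q.
Proof.
move=> hp hq; apply/eqP => pq; move/setP: N12_disjoint => /(_ p).
by rewrite !inE hp pq hq.
Qed.

Lemma face_setU_minus_pair p q : p \in N1 -> q \in N2 -> W :\: [set p; q] \in K.
Proof.
move=> hp hq; apply/negPn/negP => /(exists_min_nonface_sub set0_face) [M hM hMS].
have hMW : M \subset W by apply: subset_trans hMS (subsetDl _ _).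
case: (min_nonface_sub_setU K_taylor N1_min N2_min hM hMW) => eM.
  by move: (subsetP hMS p); rewrite eM hp !inE eqxx => /(_ isT).
by move: (subsetP hMS q); rewrite eM hq !inE eqxx orbT => /(_ isT).
Qed.

(* The sign (-1)^(q < p) cancels ext_sign [set p] [set q], see pairing_Kmul_Kgen. *)
Definition pairing (x : KA m k) : k := \sum_(p in N1) \sum_(q in N2)
  (-1) ^+ (q < p)%N * (x [set p; q])@_(indmnm (W :\: [set p; q])).

Lemma mcoeff_Kd_pair (z : KA m k) p q : p \in N1 -> q \in N2 ->
  let Z T := (z T)@_(indmnm (W :\: T)) in
  (Kd K z [set p; q])@_(indmnm (W :\: [set p; q])) =
   \sum_(l | (l \in N1) && (l != p)) (-1) ^+ nbelow l [set p; q] * Z (l |: [set p; q]) +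
   \sum_(l | (l \in N2) && (l != q)) (-1) ^+ nbelow l [set p; q] * Z (l |: [set p; q]).
Proof.
move=> hp hq Z; rewrite KdE raddf_sum /=.
rewrite (eq_bigr (fun l => if l \in W :\: [set p; q]
    then (-1) ^+ nbelow l [set p; q] * Z (l |: [set p; q]) else 0)); last first.
  move=> l hl; rewrite mcoeffZ mcoeff_SRred msupport_indmnm face_setU_minus_pair //.
  rewrite mcoeffXl_indmnm; case: ifP => // _; last by rewrite mulr0.
  by rewrite /Z setDDl [[set p; q] :|: _]setUC.
rewrite -big_mkcondr (eq_bigl (fun l => l \in W :\: [set p; q])); last first.
  by move=> l; rewrite !inE; case: (l == p); case: (l == q); rewrite ?andbF.
rewrite (bigID (fun l => l \in N1)) /=; congr (_ + _); apply: eq_bigl => l.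
  case: (boolP (l \in N1)) => hl1; rewrite ?andbF ?andbT //.
  rewrite !inE hl1 /=; case: (l =P p) => //= _.
  by case: (l =P q) => // lq; move: (disjoint_neq hl1 hq); rewrite lq eqxx.
case: (boolP (l \in N1)) => hl1 /=; rewrite ?andbF ?andbT.
  by case: (boolP (l \in N2)) => hl2 //=; move: (disjoint_neq hl1 hl2); rewrite eqxx.
rewrite !inE (negbTE hl1) /=; case: (l =P q) => _; rewrite ?orbT ?orbF ?andbF ?andbT //.
by case: (l =P p) => // lp; rewrite lp hp in hl1.
Qed.

Lemma pairing_Kd z : pairing (Kd K z) = 0.
Proof.
rewrite /pairing.
under eq_bigr => p hp do under eq_bigr => q hq do
  rewrite (mcoeff_Kd_pair z hp hq) mulrDr.
under eq_bigr => p hp do rewrite big_split /=.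
rewrite big_split /= [X in X + _](_ : _ = 0) ?add0r.
  apply: big1 => p hp; under eq_bigr => q hq do rewrite mulr_sumr.
  apply: sum_pairs_antisym => q l hq hl hql.
  have hpq := disjoint_neq hp hq; have hpl := disjoint_neq hp hl.
  rewrite !mulrA -mulNr; congr (_ * _).
    rewrite !nbelow2 // -!exprD -[RHS]mulN1r -exprS; apply: signr_odd_eq.
    move: hpq hpl; rewrite -!val_eqE /= => hpq hpl.
    rewrite hql (leq_gtF (ltnW hql)).
    by case: (ltngtP p q) hpq => // h1 _; case: (ltngtP p l) hpl => // h2 _; solve_odd.
  suff -> : q |: [set p; l] = l |: [set p; q] by [].
  by apply/setP => y; rewrite !inE; case: (y == p); case: (y == q); case: (y == l); rewrite ?orbT.
rewrite exchange_big /=; apply: big1 => q hq; under eq_bigr => p hp do rewrite mulr_sumr.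
apply: sum_pairs_antisym => p l hp hl hpl.
have hpq := disjoint_neq hp hq; have hlq := disjoint_neq hl hq.
rewrite !mulrA -mulNr; congr (_ * _).
  rewrite !nbelow2 // -!exprD -[RHS]mulN1r -exprS; apply: signr_odd_eq.
  by rewrite hpl (leq_gtF (ltnW hpl)); solve_odd.
suff -> : p |: [set l; q] = l |: [set p; q] by [].
by apply/setP => y; rewrite !inE; case: (y == p); case: (y == q); case: (y == l); rewrite ?orbT.
Qed.

Lemma indmnm_Kgen_prod i j : i \in N1 -> j \in N2 ->
  (indmnm (N1 :\ i) + indmnm (N2 :\ j))%MM = indmnm (W :\: [set i; j]).
Proof.
move=> hi hj; rewrite -indmnmU; last first.
  apply/setP => x; move/setP: N12_disjoint => /(_ x); rewrite !inE.
  by case: (x \in N1); case: (x \in N2); rewrite ?andbF.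
congr indmnm; apply/setP => x; rewrite /W !inE.
case: (boolP (x \in N1)) => h1; case: (boolP (x \in N2)) => h2 //=.
- by move: (disjoint_neq h1 h2); rewrite eqxx.
- by rewrite negb_or (disjoint_neq h1 hj); case: (x == i).
- by rewrite negb_or eq_sym (disjoint_neq hi h2) andbT; case: (x == j).
- by rewrite !andbF.
Qed.

Lemma mcoeff_Kmul_Kgen i j p q : i \in N1 -> j \in N2 -> p \in N1 -> q \in N2 ->
  ((Kmul K (Kbar (Kgen k N1 i)) (Kgen k N2 j)) [set p; q])@_(indmnm (W :\: [set p; q])) =
  if (p == i) && (q == j) then ext_sign k [set i] [set j] else 0.
Proof.
move=> hi hj hp hq; rewrite KmulE.
have hqi : q != i by rewrite eq_sym; apply: disjoint_neq.
case: (p =P i) => [pi|/eqP/negbTE npi]; rewrite ?npi /=; last first.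
  rewrite big1 ?mcoeff0 // => J hJ; rewrite !ffunE.
  case: (J =P [set i]) => [eJ|_]; last by rewrite scaler0 mul0r SRred0 scaler0.
  have : i \in [set p; q] by apply: (subsetP hJ); rewrite eJ set11.
  rewrite !inE => /orP[/eqP ip|/eqP iq]; first by rewrite ip eqxx in npi.
  by rewrite iq eqxx in hqi.
subst p; rewrite (bigD1 [set i]) /=; last by rewrite sub1set !inE eqxx.
rewrite big1 ?addr0; last first.
  by move=> J /andP[_ /negbTE hJ]; rewrite !ffunE hJ scaler0 mul0r SRred0 scaler0.
have -> : [set i; q] :\: [set i] = [set q].
  apply/setP => x; rewrite !inE; case: (x =P q) => [->|_]; first by rewrite hqi orbT.
  by case: (x == i); rewrite ?andbF.
rewrite !ffunE eqxx (inj_eq set1_inj); case: (q =P j) => [->|_]; last first.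
  by rewrite mulr0 SRred0 scaler0 mcoeff0.
rewrite cards1 expr2 mulN1r opprK scale1r -mpolyXD indmnm_Kgen_prod //.
rewrite SRredX_face; last by rewrite msupport_indmnm face_setU_minus_pair.
by rewrite mcoeffZ mcoeffX eqxx mulr1.
Qed.

Lemma pairing_Kmul_Kgen i j : i \in N1 -> j \in N2 ->
  pairing (Kmul K (Kbar (Kgen k N1 i)) (Kgen k N2 j)) = 1.
Proof.
move=> hi hj; rewrite /pairing.
under eq_bigr => p hp do under eq_bigr => q hq do rewrite (mcoeff_Kmul_Kgen hi hj hp hq).
rewrite (bigD1 i) //= [X in _ + X]big1 ?addr0; last first.
  by move=> p /andP[_ /negbTE ->]; rewrite big1 // => q _; rewrite mulr0.
rewrite (bigD1 j) //= [X in _ + X]big1 ?addr0; last first.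
  by move=> q /andP[_ /negbTE ->]; rewrite andbF mulr0.
rewrite !eqxx ext_signE -exprD ninvE big_set1 nbelow1; apply/eqP.
by rewrite -signr_odd oddD addbb.
Qed.

Lemma disjoint_min_nonfaces_not_golod : ~ golod k K.
Proof.
move=> K_golod.
case: N1_min => /set0Pn [i hi] _ _; case: N2_min => /set0Pn [j hj] _ _.
pose c t := if t == 0%N then Kgen k N1 i else Kgen k N2 j.
have c_pos t : (t < 2)%N -> pos_cycle K (c t).
  by case: t => [|[|]] // _; rewrite /c /=; apply: Kgen_pos_cycle.
have [|a [a_def [w [_ a_bd]]]] := K_golod 2%N c isT c_pos.
  exists (fun t _ => c t) => t u /andP[htu hu2] hn; split.
  - by case: (c_pos t (leq_ltn_trans htu hu2)) => [[]].
  - move=> _; exists 0; split; last by rewrite subrr linear0.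
    by move=> J a; rewrite ffunE mcoeff_msupp mcoeff0 eqxx.
  - move=> htu'; exfalso; apply: hn.
    by case: u hu2 htu htu' => [|[|u]] //; case: t.
have [_ /(_ erefl) [y0 [_ e0]] _] := a_def 0%N 0%N isT (fun '(conj _ h) => ltac:(discriminate h)).
have [_ /(_ erefl) [y1 [_ e1]] _] := a_def 1%N 1%N isT (fun '(conj h _) => ltac:(discriminate h)).
rewrite /massey_value /= big_nat1 in a_bd.
have [w' bd] := Kmul_Kbar_cohomologous K_complex
  (Kd_Kgen k N1_min hi) (Kd_Kgen k N2_min hj) e0 e1 a_bd.
by have := congr1 pairing bd; rewrite pairing_Kd pairing_Kmul_Kgen // => /eqP; rewrite oner_eq0.
Qed.

End DisjointMinimalNonfaces.

Theorem proposition2p6 (m : nat) (K : {set {set 'I_m}}) (k : comNzRingType) :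
  simplicial_complex K -> minimal_taylor K -> golod k K ->
  forall N1 N2 : {set 'I_m}, min_nonface K N1 -> min_nonface K N2 ->
  N1 != N2 -> N1 :&: N2 != set0.
Proof.
move=> K_complex K_taylor K_golod N1 N2 N1_min N2_min _.
apply/negP => /eqP N12_disjoint.
exact: (disjoint_min_nonfaces_not_golod K_complex K_taylor N1_min N2_min N12_disjoint K_golod).
Qed.
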